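(* Let $\mathscr{C}$ be a $(t,1)_q$ generalized convertible code over $\mathbb{F}_q$ with initial codes $\mathcal{C}^{I_1},\dots,\mathcal{C}^{I_t}$ ($\mathcal{C}^{I_i}$ an $[n_{I_i},k_{I_i}]_q$ code) and final code $\mathcal{C}^F$ (an $[n_F,k_F]_q$ code). Assume $\mathcal{C}^F$ has $(r,\delta)$-locality and let $d_F$ be its minimum distance. For $i\in[t]$ let $\Delta_i=|\mathcal{U}_i\setminus\mathcal{R}_i|-d_F+1$. Then for each $i\in[t]$, $$|\mathcal{R}_i|\ge\begin{cases}k_{I_i}, & \text{if } \Delta_i\le 0,\\ k_{I_i}-\Delta_i+(\delta-1)\left\lfloor\frac{\Delta_i}{r+\delta-1}\right\rfloor, & \text{otherwise}.\end{cases}$$ Moreover, if $d_F>n_{I_i}-k_{I_i}+1$ for some $i\in[t]$, then $\Delta_i\le 0$ and hence $|\mathcal{R}_i|\ge k_{I_i}$.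
   Context: All codes are linear over $\mathbb{F}_q$; $[n]=\{1,\dots,n\}$. A $(t,1)_q$ generalized convertible code consists of $t$ initial linear codes $\mathcal{C}^{I_1},\dots,\mathcal{C}^{I_t}$, $\mathcal{C}^{I_i}$ an $[n_{I_i},k_{I_i}]_q$ code, a final linear $[n_F,k_F]_q$ code $\mathcal{C}^F$ with $k_F=\sum_i k_{I_i}$, and a linear bijection $\phi:\mathcal{C}^{I_1}\times\cdots\times\mathcal{C}^{I_t}\to\mathcal{C}^F$, together with: for each $i$, a set $\mathcal{U}_i$ of coordinates of $\mathcal{C}^{I_i}$ (unchanged symbols) with an injective assignment of each $u\in\mathcal{U}_i$ to a coordinate of $\mathcal{C}^F$, images of different pairs $(i,u)$ distinct, such that for all $(c_1,\dots,c_t)$ the coordinate of $\phi(c_1,\dots,c_t)$ assigned to $u$ equals the $u$-th coordinate of $c_i$; the set $\mathcal{W}$ of coordinates of $\mathcal{C}^F$ not assigned to any unchanged symbol (written symbols); and for each $i$ a set $\mathcal{R}_i$ of coordinates of $\mathcal{C}^{I_i}$ (read symbols) such that $\phi(c_1,\dots,c_t)|_{\mathcal{W}}$ is a function of $(c_1|_{\mathcal{R}_1},\dots,c_t|_{\mathcal{R}_t})$. A code $\mathcal{C}\subseteq\mathbb{F}_q^n$ has $(r,\delta)$-locality ($r\ge1,\delta\ge2$) if every coordinate $i$ lies in a subset $J_i\subseteq[n]$ with $|J_i|\le r+\delta-1$ such that $\mathcal{C}|_{J_i}$ has minimum distance at least $\delta$. *)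

From HB Require Import structures.
From mathcomp Require Import all_boot all_order all_algebra.
Set Implicit Arguments. Unset Strict Implicit. Unset Printing Implicit Defensive.
Import Order.TTheory GRing.Theory Num.Theory.
Local Open Scope ring_scope.

(* Linear codes of length n over F are subspaces of row vectors 'rV[F]_n;
   the j-th coordinate of a codeword c is c ord0 j. *)

Definition supp_in (F : fieldType) (n : nat) (J : {set 'I_n}) (c : 'rV[F]_n)
  : {set 'I_n} := [set j in J | c ord0 j != 0].

Definition wt (F : fieldType) (n : nat) (c : 'rV[F]_n) : nat :=
  #|supp_in [set: 'I_n] c|.

Definition is_min_dist (F : fieldType) (n : nat) (C : {vspace 'rV[F]_n})
  (d : nat) : Prop :=
  (exists2 c, c \in C & c != 0 /\ wt c = d) /\
  (forall c, c \in C -> c != 0 -> (d <= wt c)%N).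

(* the restricted (punctured) code C|_J has minimum distance at least delta:
   every codeword whose restriction to J is nonzero has at least delta
   nonzero coordinates in J *)
Definition restr_dist_ge (F : fieldType) (n : nat) (C : {vspace 'rV[F]_n})
  (J : {set 'I_n}) (delta : nat) : Prop :=
  forall c, c \in C -> supp_in J c != set0 -> (delta <= #|supp_in J c|)%N.

Definition has_locality (F : fieldType) (n : nat) (C : {vspace 'rV[F]_n})
  (r delta : nat) : Prop :=
  (1 <= r)%N /\ (2 <= delta)%N /\
  forall i : 'I_n, exists J : {set 'I_n},
    [/\ i \in J, (#|J| <= r + delta - 1)%N & restr_dist_ge C J delta].

(* (t,1)_q generalized convertible code with initial codes C i of length n i,
   final code CF of length nF, conversion map phi, unchanged symbols U i
   assigned to final coordinates via f i, and read symbols R i. *)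
Definition gen_convertible (F : fieldType) (t : nat) (n : 'I_t -> nat)
  (C : forall i : 'I_t, {vspace 'rV[F]_(n i)})
  (nF : nat) (CF : {vspace 'rV[F]_nF})
  (phi : (forall i : 'I_t, 'rV[F]_(n i)) -> 'rV[F]_nF)
  (U : forall i : 'I_t, {set 'I_(n i)})
  (f : forall i : 'I_t, 'I_(n i) -> 'I_nF)
  (R : forall i : 'I_t, {set 'I_(n i)}) : Prop :=
  let inC (x : forall i : 'I_t, 'rV[F]_(n i)) := forall i, x i \in C i in
  (* written symbols: final coordinates not assigned to unchanged symbols *)
  let W := [set w : 'I_nF | [forall i : 'I_t, [forall u in U i, f i u != w]]] in
  (
   \dim CF = (\sum_(i < t) \dim (C i))%N /\
   (forall a x y, inC x -> inC y ->
      phi (fun i => a *: x i + y i) = a *: phi x + phi y) /\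
   (forall x, inC x -> phi x \in CF) /\
   (forall x y, inC x -> inC y -> phi x = phi y -> forall i, x i = y i) /\
   (forall z, z \in CF -> exists2 x, inC x & phi x = z) /\
   (forall i (u v : 'I_(n i)), u \in U i -> v \in U i -> f i u = f i v -> u = v)
   /\ (forall i j (u : 'I_(n i)) (v : 'I_(n j)), u \in U i -> v \in U j ->
         i != j -> f i u != f j v) /\
   (forall x, inC x -> forall i u, u \in U i -> phi x ord0 (f i u) = x i ord0 u) /\
   (forall x y, inC x -> inC y ->
      (forall i j, j \in R i -> x i ord0 j = y i ord0 j) ->
      forall w, w \in W -> phi x ord0 w = phi y ord0 w)).

Definition Delta (t : nat) (n : 'I_t -> nat)
  (U R : forall i : 'I_t, {set 'I_(n i)}) (dF : nat) (i : 'I_t) : int :=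
  (#|U i :\: R i|%:Z - dF%:Z + 1)%R.

From HB Require Import structures.
From mathcomp Require Import all_boot all_order all_algebra.
From mathcomp Require Import zify.
From Stdlib Require Import FunctionalExtensionality.
Set Implicit Arguments. Unset Strict Implicit. Unset Printing Implicit Defensive.
Import Order.TTheory GRing.Theory Num.Theory.
Local Open Scope ring_scope.

(* Fix i and let A := U_i \ R_i.  Feeding phi a codeword c of C^{I_i} that
   vanishes on R_i, and zero in every other slot, produces a codeword of C^F
   that copies c on f_i(A) and is zero elsewhere: the written symbols only see
   the (zero) read symbols.  So the subcode K0 of C^{I_i} vanishing on R_i,
   of dimension k' >= k_{I_i} - |R_i|, embeds isometrically on A into C^F and
   inherits there the minimum distance d_F and the (r, delta)-locality.  The
   Singleton-like bound for locally recoverable codes,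
   d_F + (k' - 1) + floor((k' - 1) / r) (delta - 1) <= |A|, then bounds k',
   and solving for k' gives the bound on |R_i|.  The Singleton-like bound is
   proved greedily on the set S of coordinates still in play: some local
   group L meets S in at least delta coordinates, imposing the vanishing of
   |L :&: S| - (delta - 1) <= r of them kills the codewords on all of L
   (fewer than delta coordinates of L remain free), and one recurses on
   S minus L. *)

Section Vanish.
Variables (F : fieldType) (n : nat).
Implicit Types (V : {vspace 'rV[F]_n}) (Y J : {set 'I_n}) (c : 'rV[F]_n).

Definition vanish V Y : {vspace 'rV[F]_n} :=
  (V :&: lker
     (linfun (colsub (@enum_val _ (mem Y)) : 'rV[F]_n -> 'rV[F]_#|Y|)))%VS.

Lemma mem_vanish V Y c :
  (c \in vanish V Y) = (c \in V) && [forall y in Y, c ord0 y == 0].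
Proof.
rewrite memv_cap memv_ker lfunE; congr (_ && _).
apply/eqP/forall_inP => [c_Y y Yy|c_Y].
  have /rowP/(_ (enum_rank_in Yy y)) := c_Y.
  by rewrite !mxE enum_rankK_in // => ->.
by apply/rowP => k; rewrite !mxE; apply/eqP/c_Y/enum_valP.
Qed.

Lemma vanish_sub V Y : (vanish V Y <= V)%VS.
Proof. exact: capvSl. Qed.

Lemma dim_vanish V Y : (\dim V <= \dim (vanish V Y) + #|Y|)%N.
Proof.
rewrite -(limg_ker_dim
  (linfun (colsub (@enum_val _ (mem Y)) : 'rV[F]_n -> 'rV[F]_#|Y|)) V).
apply: leq_add => //.
by rewrite (leq_trans (dimvS (subvf _))) // dimvf /dim /= mul1n.
Qed.

Lemma supp_in_vanish V Y J c :
  c \in vanish V Y -> supp_in J c = supp_in (J :\: Y) c.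
Proof.
rewrite mem_vanish => /andP[_ /forall_inP c_Y]; apply/setP => j; rewrite !inE.
by case: (boolP (j \in Y)) => [/c_Y/eqP ->|]; rewrite ?eqxx ?andbF.
Qed.

Lemma card_supp_in J c : (#|supp_in J c| <= #|J|)%N.
Proof. by apply/subset_leq_card/subsetP => j; rewrite inE => /andP[]. Qed.

End Vanish.

Lemma exists_subset_card (T : finType) (A : {set T}) k :
  (k <= #|A|)%N -> exists2 B : {set T}, B \subset A & #|B| = k.
Proof.
move=> le_kA.
have /card_gt0P[B] : (0 < #|[set B : {set T} | B \subset A & #|B| == k]|)%N.
  by rewrite cards_draws bin_gt0.
by rewrite inE => /andP[sBA /eqP cardB]; exists B.
Qed.

Lemma lrc_bound_invert (m r d D : nat) :
  (0 < r)%N -> (m + m %/ r * d < D)%N -> (m.+1 + d * (D %/ (r + d)) <= D)%N.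
Proof.
move=> r_gt0 lt_mD; have [le_q|lt_q] := leqP (D %/ (r + d)) (m %/ r).
  have : (D %/ (r + d) * d <= m %/ r * d)%N by rewrite leq_mul2r le_q orbT.
  lia.
have := leq_divM D (r + d); have := ltn_ceil m r_gt0.
rewrite mulnDr => lt_m le_D.
have : ((m %/ r).+1 * r <= D %/ (r + d) * r)%N by rewrite leq_mul2r lt_q orbT.
lia.
Qed.

Section LocalityBound.
Variables (F : fieldType) (n r delta : nat).
Variables (A : {set 'I_n}) (K0 : {vspace 'rV[F]_n}).
Hypotheses (r_gt0 : (0 < r)%N) (delta_gt0 : (0 < delta)%N).
Hypothesis vanish_A : vanish K0 A = 0%VS.
Hypothesis local_A : forall u, u \in A -> exists L : {set 'I_n},
  [/\ u \in L, L \subset A, (#|L| <= r + delta - 1)%N & restr_dist_ge K0 L delta].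

Implicit Types (S : {set 'I_n}) (K : {vspace 'rV[F]_n}).

Lemma vanish_eq0 S K : (K <= vanish K0 (A :\: S))%VS -> vanish K S = 0%VS.
Proof.
move=> sKV; apply/eqP; rewrite -subv0 -vanish_A; apply/subvP => c.
rewrite !mem_vanish => /andP[/(subvP sKV)]; rewrite mem_vanish.
move=> /andP[-> /forall_inP c_AS] /forall_inP c_S; apply/forall_inP => j Aj.
by case: (boolP (j \in S)) => [/c_S|Sj]; last by apply: c_AS; rewrite inE Sj.
Qed.

Lemma dim_le_card S K : (K <= vanish K0 (A :\: S))%VS -> (\dim K <= #|S|)%N.
Proof. by move=> sKV; have := dim_vanish K S; rewrite vanish_eq0 // dimv0. Qed.

Lemma lrc_bound_small S K : (K <= vanish K0 (A :\: S))%VS ->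
    (0 < \dim K)%N -> (\dim K <= r)%N ->
  exists2 c, c \in K & c != 0 /\
    (#|supp_in S c| + (\dim K).-1 + (\dim K).-1 %/ r * delta.-1 <= #|S|)%N.
Proof.
move=> sKV dimK_gt0 dimK_le_r.
have [Y sYS cardY] :=
  exists_subset_card (leq_trans (leq_pred _) (dim_le_card sKV)).
have dimKY_gt0 : (0 < \dim (vanish K Y))%N by have := dim_vanish K Y; lia.
have cKY := memv_pick (vanish K Y).
exists (vpick (vanish K Y)); first exact: subvP (vanish_sub K Y) _ cKY.
split; first by rewrite vpick0 -dimv_eq0 -lt0n.
rewrite (supp_in_vanish S cKY) divn_small; last by lia.
have := card_supp_in (S :\: Y) (vpick (vanish K Y)).
by rewrite cardsD (setIidPr sYS); have := subset_leq_card sYS; lia.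
Qed.

Lemma supp_in_local S (L : {set 'I_n}) c :
  L \subset A -> c \in vanish K0 (A :\: S) -> supp_in L c = supp_in (L :&: S) c.
Proof.
move=> sLA cV; rewrite (supp_in_vanish L cV) setDDr.
by rewrite -setD_eq0 in sLA; rewrite (eqP sLA) set0U.
Qed.

Lemma vanish_local_group S K (L Y : {set 'I_n}) :
    L \subset A -> restr_dist_ge K0 L delta ->
    (K <= vanish K0 (A :\: S))%VS -> Y \subset L :&: S ->
    (#|L :&: S| < #|Y| + delta)%N ->
  (vanish K Y <= vanish K0 (A :\: (S :\: L)))%VS.
Proof.
move=> sLA L_dist sKV sYLS card_LS; apply/subvP => c cKY.
have cK := subvP (vanish_sub K Y) _ cKY.
have cV := subvP sKV _ cK.
have := cV; rewrite mem_vanish => /andP[cK0 /forall_inP c_AS].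
have supp_L : supp_in L c = set0.
  apply: contraTeq card_LS => /(L_dist c cK0).
  rewrite (supp_in_local sLA cV) (supp_in_vanish _ cKY) -leqNgt => le_delta.
  have := leq_trans le_delta (card_supp_in _ _).
  by rewrite cardsD (setIidPr sYLS); have := subset_leq_card sYLS; lia.
rewrite mem_vanish cK0; apply/forall_inP => j.
rewrite !inE negb_and negbK => /andP[/orP[Lj|Sj] Aj].
  by move: (in_set0 j); rewrite -supp_L inE Lj /= => /negbT; rewrite negbK.
by apply: c_AS; rewrite inE Sj.
Qed.

Lemma local_step S K : S \subset A -> (K <= vanish K0 (A :\: S))%VS ->
    (0 < \dim K)%N ->
  exists S' Y : {set 'I_n}, [/\ S' \subset S, (#|S'| < #|S|)%N,
    (#|S'| + #|Y| + delta.-1 <= #|S|)%N, (#|Y| <= r)%N &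
    (vanish K Y <= vanish K0 (A :\: S'))%VS].
Proof.
move=> sSA sKV dimK_gt0; set c := vpick K.
have cV : c \in vanish K0 (A :\: S) := subvP sKV _ (memv_pick K).
have /forall_inPn[j Sj cj] : ~~ [forall j in S, c ord0 j == 0].
  have c_nz : c != 0 by rewrite vpick0 -dimv_eq0 -lt0n.
  apply: contra c_nz => c_S.
  by rewrite -memv0 -(vanish_eq0 sKV) mem_vanish memv_pick.
have [L [Lj sLA cardL L_dist]] := local_A (subsetP sSA j Sj).
have delta_le : (delta <= #|L :&: S|)%N.
  apply: leq_trans (card_supp_in _ c); rewrite -(supp_in_local sLA cV).
  apply: L_dist; first by move: cV; rewrite mem_vanish => /andP[].
  by apply/set0Pn; exists j; rewrite inE Lj.
have [Y sY cardY] := exists_subset_card (leq_subr delta.-1 #|L :&: S|).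
have cardLS_L := subset_leq_card (subsetIl L S).
have cardLS_S := subset_leq_card (subsetIr L S).
exists (S :\: L), Y; split; rewrite ?subsetDl ?cardsD ?(setIC S) //; try lia.
by apply: (vanish_local_group sLA L_dist sKV sY); lia.
Qed.

Lemma lrc_bound S K : S \subset A -> (K <= vanish K0 (A :\: S))%VS ->
    (0 < \dim K)%N ->
  exists2 c, c \in K & c != 0 /\
    (#|supp_in S c| + (\dim K).-1 + (\dim K).-1 %/ r * delta.-1 <= #|S|)%N.
Proof.
elim: {S}_.+1 {-2}S (ltnSn #|S|) K => // N IH S le_SN K sSA sKV dimK_gt0.
have [dimK_le_r|r_lt_dimK] := leqP (\dim K) r; first exact: lrc_bound_small.
have [S' [Y [sS'S lt_S'S cardS'Y le_Y_r sKYV]]] := local_step sSA sKV dimK_gt0.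
have dimKY := dim_vanish K Y.
have dimKY_gt0 : (0 < \dim (vanish K Y))%N by lia.
have [c cKY [c_nz bound_c]] :=
  IH S' (leq_trans lt_S'S le_SN) _ (subset_trans sS'S sSA) sKYV dimKY_gt0.
exists c; first exact: subvP (vanish_sub K Y) _ cKY.
split=> //; rewrite (supp_in_local sSA (subvP sKYV _ cKY)) (setIidPr sS'S).
have le_div : ((\dim K).-1 %/ r <= (\dim (vanish K Y)).-1 %/ r + 1)%N.
  by rewrite addnC -(divnMDl _ _ r_gt0) mul1n leq_div2r //; lia.
have : ((\dim K).-1 %/ r * delta.-1
         <= ((\dim (vanish K Y)).-1 %/ r + 1) * delta.-1)%N.
  by rewrite leq_mul2r le_div orbT.
lia.
Qed.
End LocalityBound.

Section Conversion.
Variables (F : fieldType) (t : nat) (n : 'I_t -> nat).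
Variable C : forall i : 'I_t, {vspace 'rV[F]_(n i)}.
Variables (nF : nat) (CF : {vspace 'rV[F]_nF}).
Variable phi : (forall i : 'I_t, 'rV[F]_(n i)) -> 'rV[F]_nF.
Variables (U R : forall i : 'I_t, {set 'I_(n i)}).
Variable f : forall i : 'I_t, 'I_(n i) -> 'I_nF.
Arguments f : clear implicits.

Let inC (x : forall j : 'I_t, 'rV[F]_(n j)) := forall j, x j \in C j.
Let W := [set w : 'I_nF | [forall j : 'I_t, [forall u in U j, f j u != w]]].

Hypothesis phi_linear : forall a x y, inC x -> inC y ->
  phi (fun j => a *: x j + y j) = a *: phi x + phi y.
Hypothesis phi_in : forall x, inC x -> phi x \in CF.
Hypothesis phi_inj : forall x y, inC x -> inC y ->
  phi x = phi y -> forall j, x j = y j.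
Hypothesis f_inj : forall j (u v : 'I_(n j)), u \in U j -> v \in U j ->
  f j u = f j v -> u = v.
Hypothesis phi_copy : forall x, inC x -> forall j u, u \in U j ->
  phi x ord0 (f j u) = x j ord0 u.
Hypothesis phi_read : forall x y, inC x -> inC y ->
  (forall j k, k \in R j -> x j ord0 k = y j ord0 k) ->
  forall w, w \in W -> phi x ord0 w = phi y ord0 w.

Let x0 : forall j : 'I_t, 'rV[F]_(n j) := fun j => 0.

Lemma inC_x0 : inC x0.
Proof. by move=> j; apply: mem0v. Qed.

Lemma phi_x0 : phi x0 = 0.
Proof.
have := phi_linear 1 inC_x0 inC_x0; rewrite scale1r.
have -> : (fun j => 1 *: x0 j + x0 j) = x0.
  by apply: functional_extensionality_dep => j; rewrite scale1r addr0.
by move=> e; apply: (addrI (phi x0)); rewrite addr0 -e.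
Qed.

Variable i : 'I_t.
Let A := U i :\: R i.
Let K0 := vanish (C i) (R i).
Let embed (c : 'rV[F]_(n i)) := phi (dfwith x0 c).

Lemma inC_dfwith c : c \in C i -> inC (dfwith x0 c).
Proof. by move=> cC j; case: dfwithP => // {}j _; apply: inC_x0. Qed.

Lemma embed_in c : c \in C i -> embed c \in CF.
Proof. by move/inC_dfwith/phi_in. Qed.

Lemma embed_eq0 c : c \in C i -> embed c = 0 -> c = 0.
Proof.
move=> cC embed0; rewrite -(dfwith_in x0 c).
by apply: phi_inj (inC_dfwith cC) inC_x0 _ i; rewrite phi_x0.
Qed.

Lemma embed_copy c u :
  c \in C i -> u \in U i -> embed c ord0 (f i u) = c ord0 u.
Proof.
by move=> cC Uu; rewrite /embed phi_copy ?dfwith_in //; apply: inC_dfwith.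
Qed.

Lemma embed_off c w : c \in K0 -> w \notin f i @: A -> embed c ord0 w = 0.
Proof.
rewrite mem_vanish => /andP[cC /forall_inP c_R] wA.
have cC' := inC_dfwith cC.
case: (boolP (w \in W)) => Ww.
  rewrite /embed (phi_read cC' inC_x0 _ Ww) ?phi_x0 ?mxE // => j.
  case: (eqVneq i j) => [<- k /c_R/eqP|ne k _]; first by rewrite dfwith_in mxE.
  by rewrite dfwith_out.
move: Ww; rewrite inE negb_forall => /existsP[j].
rewrite negb_forall_in => /exists_inP[u Uu /negbNE/eqP ew]; rewrite -ew in wA *.
rewrite /embed phi_copy //; case: (eqVneq i j) => [eij|ne]; last first.
  by rewrite dfwith_out // mxE.
move: u Uu wA {ew}; rewrite -eij => u Uu wA; rewrite dfwith_in.
case: (boolP (u \in R i)) => [/c_R/eqP //|Ru].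
by move: wA; rewrite imset_f // inE Ru.
Qed.

Lemma f_injA : {in A &, injective (f i)}.
Proof. by move=> u v /setDP[Uu _] /setDP[Uv _]; apply: f_inj. Qed.

Lemma supp_embed c (J : {set 'I_nF}) : c \in K0 ->
  supp_in J (embed c) = f i @: supp_in (A :&: f i @^-1: J) c.
Proof.
move=> cK0; have cC := subvP (vanish_sub _ _) _ cK0.
apply/setP => w; rewrite inE; apply/andP/imsetP => [[Jw nz]|[v]].
  case: (boolP (w \in f i @: A)) => [/imsetP[v Av ew]|wA]; last first.
    by rewrite embed_off ?eqxx in nz.
  exists v => //; move: Av Jw nz; rewrite ew !inE => /andP[-> Uv] ->.
  by rewrite embed_copy // Uv.
by rewrite !inE => /andP[/andP[/andP[_ Uv] Jfv] cv] ->; rewrite embed_copy.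
Qed.

Lemma card_supp_embed c (J : {set 'I_nF}) : c \in K0 ->
  #|supp_in J (embed c)| = #|supp_in (A :&: f i @^-1: J) c|.
Proof.
move=> cK0; rewrite supp_embed // card_in_imset //.
by apply: sub_in2 f_injA => v; rewrite !inE => /andP[/andP[-> _] _].
Qed.

Lemma vanish_K0_A : vanish K0 A = 0%VS.
Proof.
apply/eqP; rewrite -subv0; apply/subvP => c; rewrite mem_vanish memv0.
move=> /andP[cK0 /forall_inP c_A]; have cC := subvP (vanish_sub _ _) _ cK0.
apply/eqP/embed_eq0/rowP => // w; rewrite mxE.
case: (boolP (w \in f i @: A)) => [/imsetP[v Av ->]|]; last exact: embed_off.
by rewrite embed_copy ?(eqP (c_A v Av)) ?(setDP Av).1.
Qed.

Lemma local_K0 r delta : has_locality CF r delta ->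
  forall u, u \in A -> exists L : {set 'I_(n i)},
    [/\ u \in L, L \subset A, (#|L| <= r + delta - 1)%N &
         restr_dist_ge K0 L delta].
Proof.
move=> [_ [_ CF_local]] u Au; have [J [Jfu cardJ J_dist]] := CF_local (f i u).
exists (A :&: f i @^-1: J); split.
- by rewrite in_setI Au inE.
- exact: subsetIl.
- apply: leq_trans cardJ; rewrite -(card_in_imset (sub_in2 _ f_injA)); last first.
    by move=> v /setIP[].
  apply/subset_leq_card/subsetP => w /imsetP[v /setIP[_]].
  by rewrite inE => Jfv ->.
- move=> c cK0 nz; rewrite -card_supp_embed //; apply: J_dist.
    exact/embed_in/(subvP (vanish_sub _ _) _ cK0).
  by rewrite supp_embed // imset_eq0.
Qed.

Lemma conversion_bound r delta dF :
    has_locality CF r delta -> is_min_dist CF dF -> (0 < \dim K0)%N ->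
  (dF + (\dim K0).-1 + (\dim K0).-1 %/ r * delta.-1 <= #|A|)%N.
Proof.
move=> loc [_ min_dist] dimK0_gt0; have [r_gt0 [delta_gt1 _]] := loc.
have sK0V : (K0 <= vanish K0 (A :\: A))%VS.
  apply/subvP => c cK0; rewrite mem_vanish cK0 setDv.
  by apply/forall_inP => j; rewrite inE.
have [c cK0 [c_nz bound_c]] := lrc_bound r_gt0 (ltnW delta_gt1) vanish_K0_A
  (local_K0 loc) (subxx A) sK0V dimK0_gt0.
have cC := subvP (vanish_sub _ _) _ cK0.
have : (dF <= wt (embed c))%N.
  by apply: min_dist; [exact: embed_in | apply: contra c_nz => /eqP/embed_eq0 ->].
rewrite /wt card_supp_embed // preimsetT setIT; lia.
Qed.
End Conversion.

(* The truncated difference [#|U i :\: R i| + 1 - dF] is Delta_i when Delta_i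
   is positive and 0 otherwise. *)
Lemma read_bound (F : fieldType) (t : nat) (n : 'I_t -> nat)
    (C : forall i : 'I_t, {vspace 'rV[F]_(n i)})
    (nF : nat) (CF : {vspace 'rV[F]_nF})
    (phi : (forall i : 'I_t, 'rV[F]_(n i)) -> 'rV[F]_nF)
    (U : forall i : 'I_t, {set 'I_(n i)})
    (f : forall i : 'I_t, 'I_(n i) -> 'I_nF)
    (R : forall i : 'I_t, {set 'I_(n i)}) (r delta dF : nat) (i : 'I_t) :
    gen_convertible C CF phi U f R -> has_locality CF r delta ->
    is_min_dist CF dF ->
  (\dim (C i) + delta.-1 * ((#|U i :\: R i| + 1 - dF) %/ (r + delta.-1))
     <= #|U i :\: R i| + 1 - dF + #|R i|)%N.
Proof.
move=> [_ [lin [inCF [inj [_ [f_inj [_ [copy read]]]]]]]] loc md.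
set D := (#|U i :\: R i| + 1 - dF)%N.
have [r_gt0 _] := loc.
have dimC := dim_vanish (C i) (R i).
have [dimK0_eq0|dimK0_gt0] := posnP (\dim (vanish (C i) (R i))).
  have : (delta.-1 * (D %/ (r + delta.-1)) <= D)%N.
    apply: leq_trans (leq_divM D (r + delta.-1)).
    by rewrite mulnC leq_mul2l leq_addl orbT.
  lia.
have := conversion_bound lin inCF inj f_inj copy read loc md dimK0_gt0.
have := @lrc_bound_invert (\dim (vanish (C i) (R i))).-1 r delta.-1 D r_gt0.
lia.
Qed.

Theorem mainTheorem3 (F : finFieldType) (t : nat) (n : 'I_t -> nat)
  (C : forall i : 'I_t, {vspace 'rV[F]_(n i)})
  (nF : nat) (CF : {vspace 'rV[F]_nF})
  (phi : (forall i : 'I_t, 'rV[F]_(n i)) -> 'rV[F]_nF)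
  (U : forall i : 'I_t, {set 'I_(n i)})
  (f : forall i : 'I_t, 'I_(n i) -> 'I_nF)
  (R : forall i : 'I_t, {set 'I_(n i)})
  (r delta dF : nat) :
  gen_convertible C CF phi U f R ->
  has_locality CF r delta ->
  is_min_dist CF dF ->
  (forall i : 'I_t,
     if (Delta U R dF i <= 0)
     then (\dim (C i) <= #|R i|)%N
     else (\dim (C i))%:Z - Delta U R dF i
            + (delta%:Z - 1) * ((Delta U R dF i) %/ (r + delta - 1)%N%:Z)%Z
          <= (#|R i|)%:Z)
  /\
  (forall i : 'I_t, (n i - \dim (C i) + 1 < dF)%N ->
     Delta U R dF i <= 0 /\ (\dim (C i) <= #|R i|)%N).
Proof.
move=> conv loc md; have [_ [delta_gt1 _]] := loc.
have card_UR i : (#|U i :\: R i| + #|R i| <= n i)%N.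
  have := cardsC (R i); rewrite card_ord => card_R.
  rewrite -[X in (_ <= X)%N]card_R addnC leq_add2l subset_leq_card //.
  by apply/subsetP => u /setDP[_]; rewrite inE.
(* [set] identifies the cardinals unfolded from [Delta] with those of
   [read_bound], which are elaborated through different coercions; otherwise
   [lia] sees them as distinct atoms. *)
split=> i; have := card_UR i; have := read_bound i conv loc md; rewrite /Delta.
  set a := #|U i :\: R i|; set b := #|R i|; set k := \dim (C i) => + _.
  case: ifP => Delta_le0; first by move/(leq_trans (leq_addr _ _)); lia.
  have -> : a%:Z - dF%:Z + 1 = (a + 1 - dF)%N by lia.
  have -> : (r + delta - 1 = r + delta.-1)%N by lia.
  have -> : delta%:Z - 1 = delta.-1 by lia.
  by rewrite divz_nat -PoszM; lia.
set a := #|U i :\: R i|; set b := #|R i|; set k := \dim (C i).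
by move/(leq_trans (leq_addr _ _)); lia.
Qed.
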